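(* Let $f\in H^p(\mathbb B)$ and $n\in\mathbb N$. If $1\le p<\infty$ then $$|f^{(n)}(0)|\le\sqrt2\,n!\,e^{1/p}\Big(1+\frac{np}{2}\Big)^{1/p}\|f\|_p,$$ and if $p=\infty$ then $|f^{(n)}(0)|\le n!\,\|f\|_\infty$.
   Context: $\mathbb H$ quaternions, $\mathbb S=\{q:q^2=-1\}$, $\mathbb B$ open unit ball. Slice regular functions on $\mathbb B$ are exactly convergent power series $f(q)=\sum_nq^na_n$, and $f^{(n)}=\partial^nf/\partial x^n$ denotes the $n$-th slice derivative, so $a_n=f^{(n)}(0)/n!$. Hardy spaces: $\|f\|_p=\sup_{I\in\mathbb S}\lim_{r\to1^-}(\frac1{2\pi}\int_{-\pi}^\pi|f(re^{I\theta})|^pd\theta)^{1/p}$ for $p<\infty$, $\|f\|_\infty=\sup_{\mathbb B}|f|$, $H^p(\mathbb B)=\{f$ regular on $\mathbb B:\|f\|_p<\infty\}$. *)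

From Stdlib Require Import Reals Lra Arith Factorial Classical ClassicalEpsilon.
Open Scope R_scope.

Record quat := Q { qr : R; qi : R; qj : R; qk : R }.

Definition qzero : quat := Q 0 0 0 0.
Definition qone : quat := Q 1 0 0 0.
Definition qreal (x : R) : quat := Q x 0 0 0.

Definition qadd (p q : quat) : quat :=
  Q (qr p + qr q) (qi p + qi q) (qj p + qj q) (qk p + qk q).

Definition qscale (c : R) (q : quat) : quat :=
  Q (c * qr q) (c * qi q) (c * qj q) (c * qk q).

Definition qmul (p q : quat) : quat :=
  Q (qr p * qr q - qi p * qi q - qj p * qj q - qk p * qk q)
    (qr p * qi q + qi p * qr q + qj p * qk q - qk p * qj q)
    (qr p * qj q - qi p * qk q + qj p * qr q + qk p * qi q)
    (qr p * qk q + qi p * qj q - qj p * qi q + qk p * qr q).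

Definition qnorm (q : quat) : R :=
  sqrt (qr q ^ 2 + qi q ^ 2 + qj q ^ 2 + qk q ^ 2).

Fixpoint qpow (q : quat) (n : nat) : quat :=
  match n with
  | O => qone
  | S m => qmul (qpow q m) q
  end.

Definition in_S (I : quat) : Prop := qmul I I = qreal (-1).

Fixpoint qpsum (a : nat -> quat) (q : quat) (N : nat) : quat :=
  match N with
  | O => qmul (qpow q 0) (a 0%nat)
  | S M => qadd (qpsum a q M) (qmul (qpow q (S M)) (a (S M)))
  end.

Definition qseries_cv (a : nat -> quat) (q : quat) (s : quat) : Prop :=
  Un_cv (fun N => qr (qpsum a q N)) (qr s) /\
  Un_cv (fun N => qi (qpsum a q N)) (qi s) /\
  Un_cv (fun N => qj (qpsum a q N)) (qj s) /\
  Un_cv (fun N => qk (qpsum a q N)) (qk s).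

(** A slice regular function on the open unit ball B is a power series
    f(q) = sum q^n a_n converging on B; we represent f by its coefficients. *)
Definition slice_regular_ball (a : nat -> quat) : Prop :=
  forall q, qnorm q < 1 -> exists s, qseries_cv a q s.

(** Value f(q) of the power series (meaningful for q in B). *)
Definition feval (a : nat -> quat) (q : quat) : quat :=
  epsilon (inhabits qzero) (fun s => qseries_cv a q s).

(** n-th slice derivative at 0:  f^(n)(0) = n! a_n. *)
Definition slice_deriv0 (a : nat -> quat) (n : nat) : quat :=
  qscale (INR (fact n)) (a n).

Definition expI (I : quat) (th : R) : quat :=
  qadd (qreal (cos th)) (qscale (sin th) I).

Definition rpow (x p : R) : R := if Rlt_dec 0 x then Rpower x p else 0.

(** Riemann integral (value when the function is Riemann integrable). *)
Definition RInt (f : R -> R) (lo hi : R) : R :=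
  epsilon (inhabits 0)
    (fun v => exists pr : Riemann_integrable f lo hi, RiemannInt pr = v).

Definition hardy_mean (p : R) (a : nat -> quat) (I : quat) (r : R) : R :=
  rpow (/ (2 * PI) *
        RInt (fun th => rpow (qnorm (feval a (qscale r (expI I th)))) p)
             (- PI) PI) (1 / p).

Definition hardy_slice_limit (p : R) (a : nat -> quat) (I : quat) (L : R) : Prop :=
  limit1_in (hardy_mean p a I) (fun r => 0 <= r < 1) L 1.

Definition hardy_norm (p : R) (a : nat -> quat) (N : R) : Prop :=
  (forall I, in_S I -> exists L, hardy_slice_limit p a I L) /\
  is_lub (fun y => exists I, in_S I /\ hardy_slice_limit p a I y) N.

Definition hinf_norm (a : nat -> quat) (N : R) : Prop :=
  is_lub (fun y => exists q, qnorm q < 1 /\ y = qnorm (feval a q)) N.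

From Pilot Require Import Defs.
From Stdlib Require Import Reals Factorial Lra Lia Psatz ClassicalEpsilon.
From Coquelicot Require Import Coquelicot.
Open Scope R_scope.

(* On the circle q = r e^{I t}, f(q) = sum_k r^k e^{k I t} a_k.  Pairing e^{-n I t} f(q) with
   the unit quaternion v = a_n / |a_n| gives a real function of t bounded by |f(q)| whose mean
   over [-pi, pi] is r^n |a_n|, by orthogonality of the trigonometric system.  Averaging the
   tangent-line inequality x^p >= d^p + p d^(p-1) (x - d) at d = r^n |a_n| therefore yields the
   Cauchy estimate r^n |a_n| <= M_p(f, r) for p >= 1; letting r -> 1 gives |a_n| <= ||f||_p,
   and the same argument with p = 1 gives |a_n| <= ||f||_oo.  The stated constant is >= 1.
   Term-by-term integration is justified by truncating the series: on |q| <= r its tails are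
   dominated by a geometric series. *)

Definition qdot (p q : quat) : R :=
  qr p * qr q + qi p * qi q + qj p * qj q + qk p * qk q.
Definition qsub (p q : quat) : quat := qadd p (qscale (-1) q).

Lemma quat_eq (p q : quat) :
  qr p = qr q -> qi p = qi q -> qj p = qj q -> qk p = qk q -> p = q.
Proof. destruct p, q; simpl; intros; subst; reflexivity. Qed.

Ltac quat_components :=
  unfold expI, qsub, qdot, qmul, qadd, qscale, qreal, qone, qzero in *;
  cbn [qr qi qj qk] in *.

Ltac quat_ring := apply quat_eq; quat_components; ring.

Lemma qmul_add_r p q s : qmul p (qadd q s) = qadd (qmul p q) (qmul p s).
Proof. quat_ring. Qed.

Lemma qmul_assoc p q s : qmul (qmul p q) s = qmul p (qmul q s).
Proof. quat_ring. Qed.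

Lemma qmul_scale_l c p q : qmul (qscale c p) q = qscale c (qmul p q).
Proof. quat_ring. Qed.

Lemma qmul_scale_r c p q : qmul p (qscale c q) = qscale c (qmul p q).
Proof. quat_ring. Qed.

Lemma qdot_scale_l c p v : qdot (qscale c p) v = c * qdot p v.
Proof. quat_components; ring. Qed.

Lemma qdot_add_l p q v : qdot (qadd p q) v = qdot p v + qdot q v.
Proof. quat_components; ring. Qed.

Lemma qnorm_dot q : qnorm q = sqrt (qdot q q).
Proof. unfold qnorm, qdot; f_equal; ring. Qed.

Lemma qdot_self_ge0 q : 0 <= qdot q q.
Proof. unfold qdot; nra. Qed.

Lemma qnorm_ge0 q : 0 <= qnorm q.
Proof. apply sqrt_pos. Qed.

Lemma qnorm_sq q : qnorm q * qnorm q = qdot q q.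
Proof. rewrite qnorm_dot; apply sqrt_sqrt, qdot_self_ge0. Qed.

Lemma qnorm_of_sq q c : 0 <= c -> qdot q q = c * c -> qnorm q = c.
Proof. intros Hc E; rewrite qnorm_dot, E; apply sqrt_square, Hc. Qed.

Lemma qnorm_zero : qnorm qzero = 0.
Proof. apply qnorm_of_sq; [lra | unfold qdot, qzero; simpl; ring]. Qed.

Lemma qnorm_one : qnorm qone = 1.
Proof. apply qnorm_of_sq; [lra | unfold qdot, qone; simpl; ring]. Qed.

Lemma qnorm_qreal x : qnorm (qreal x) = Rabs x.
Proof.
  apply qnorm_of_sq; [apply Rabs_pos|].
  rewrite <- Rabs_mult, Rabs_right by nra; unfold qdot, qreal; simpl; ring.
Qed.

Lemma qnorm_scale s p : qnorm (qscale s p) = Rabs s * qnorm p.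
Proof.
  apply qnorm_of_sq; [apply Rmult_le_pos; [apply Rabs_pos | apply qnorm_ge0]|].
  replace (Rabs s * qnorm p * (Rabs s * qnorm p))
    with ((Rabs s * Rabs s) * (qnorm p * qnorm p)) by ring.
  rewrite qnorm_sq, <- Rabs_mult, Rabs_right by nra; quat_components; ring.
Qed.

Lemma qnorm_mul p q : qnorm (qmul p q) = qnorm p * qnorm q.
Proof.
  apply qnorm_of_sq; [apply Rmult_le_pos; apply qnorm_ge0|].
  replace (qnorm p * qnorm q * (qnorm p * qnorm q))
    with ((qnorm p * qnorm p) * (qnorm q * qnorm q)) by ring.
  rewrite !qnorm_sq; quat_components; ring.
Qed.

Lemma qpow_norm q k : qnorm (qpow q k) = qnorm q ^ k.
Proof.
  induction k as [|k IH]; simpl qpow; [apply qnorm_one|].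
  rewrite qnorm_mul, IH; simpl; ring.
Qed.

(* Lagrange's identity in dimension four. *)
Lemma qdot_sq_le p q : qdot p q * qdot p q <= qdot p p * qdot q q.
Proof.
  destruct p as [a b c d], q as [e f g h]; unfold qdot; simpl.
  assert (E : (a*a+b*b+c*c+d*d)*(e*e+f*f+g*g+h*h) - (a*e+b*f+c*g+d*h)*(a*e+b*f+c*g+d*h)
    = (a*f-b*e)^2+(a*g-c*e)^2+(a*h-d*e)^2+(b*g-c*f)^2+(b*h-d*f)^2+(c*h-d*g)^2) by ring.
  pose proof (pow2_ge_0 (a*f-b*e)); pose proof (pow2_ge_0 (a*g-c*e));
  pose proof (pow2_ge_0 (a*h-d*e)); pose proof (pow2_ge_0 (b*g-c*f));
  pose proof (pow2_ge_0 (b*h-d*f)); pose proof (pow2_ge_0 (c*h-d*g)).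
  lra.
Qed.

Lemma qdot_le_qnorm p q : qdot p q <= qnorm p * qnorm q.
Proof.
  pose proof (qnorm_ge0 p); pose proof (qnorm_ge0 q).
  pose proof (qdot_sq_le p q) as Hsq; rewrite <- !qnorm_sq in Hsq.
  apply Rsqr_incr_0_var; [unfold Rsqr; nra | nra].
Qed.

Lemma qnorm_add_le p q : qnorm (qadd p q) <= qnorm p + qnorm q.
Proof.
  pose proof (qdot_le_qnorm p q); pose proof (qnorm_ge0 p); pose proof (qnorm_ge0 q).
  apply Rsqr_incr_0_var; [| nra]. unfold Rsqr.
  rewrite qnorm_sq.
  replace (qdot (qadd p q) (qadd p q)) with (qdot p p + 2 * qdot p q + qdot q q)
    by (quat_components; ring).
  rewrite <- !qnorm_sq; nra.
Qed.

Lemma qnorm_sub_le p q : qnorm (qsub p q) <= qnorm p + qnorm q.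
Proof.
  unfold qsub; eapply Rle_trans; [apply qnorm_add_le|].
  rewrite qnorm_scale, Rabs_left by lra; lra.
Qed.

Lemma qnorm_sub_triangle p q r : qnorm (qsub p r) <= qnorm (qsub p q) + qnorm (qsub q r).
Proof.
  replace (qsub p r) with (qadd (qsub p q) (qsub q r)) by quat_ring.
  apply qnorm_add_le.
Qed.

Lemma qnorm_sub_sym p q : qnorm (qsub p q) = qnorm (qsub q p).
Proof.
  replace (qsub q p) with (qscale (-1) (qsub p q)) by quat_ring.
  rewrite qnorm_scale, Rabs_left by lra; ring.
Qed.

Lemma qnorm_sub_ge p q : qnorm p - qnorm q <= qnorm (qsub p q).
Proof.
  replace p with (qadd (qsub p q) q) at 1 by quat_ring.
  pose proof (qnorm_add_le (qsub p q) q); lra.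
Qed.

Lemma qnorm_le_components q :
  qnorm q <= Rabs (qr q) + Rabs (qi q) + Rabs (qj q) + Rabs (qk q).
Proof.
  assert (Hsq : forall x, x * x = Rabs x * Rabs x)
    by (intros x; rewrite <- Rabs_mult, Rabs_right; nra).
  pose proof (Rabs_pos (qr q)); pose proof (Rabs_pos (qi q));
  pose proof (Rabs_pos (qj q)); pose proof (Rabs_pos (qk q)).
  apply Rsqr_incr_0_var; [| lra]. unfold Rsqr. rewrite qnorm_sq.
  unfold qdot; rewrite (Hsq (qr q)), (Hsq (qi q)), (Hsq (qj q)), (Hsq (qk q)); nra.
Qed.

Lemma in_S_imaginary I : in_S I -> qr I = 0 /\ qi I ^ 2 + qj I ^ 2 + qk I ^ 2 = 1.
Proof.
  unfold in_S, qmul, qreal; destruct I as [x y z w]; simpl; intros H.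
  injection H; intros H4 H3 H2 H1.
  assert (x = 0).
  { destruct (Req_dec x 0) as [|Hx]; auto.
    assert (y = 0) by (apply (Rmult_eq_reg_l (2*x)); [lra| nra]).
    assert (z = 0) by (apply (Rmult_eq_reg_l (2*x)); [lra| nra]).
    assert (w = 0) by (apply (Rmult_eq_reg_l (2*x)); [lra| nra]).
    subst; nra. }
  subst; split; [reflexivity | nra].
Qed.

Definition I_unit : quat := Q 0 1 0 0.

Lemma I_unit_in_S : in_S I_unit.
Proof. unfold in_S, I_unit; quat_ring. Qed.

Definition circ (I : quat) (r t : R) : quat := qscale r (expI I t).

Section ImaginaryUnit.
Variable I : quat.
Hypothesis HI : in_S I.

Lemma expI_norm t : qnorm (expI I t) = 1.
Proof.
  destruct (in_S_imaginary I HI) as [H0 H1].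
  apply qnorm_of_sq; [lra|].
  transitivity (cos t * cos t + sin t * sin t * (qi I ^ 2 + qj I ^ 2 + qk I ^ 2)).
  - quat_components; rewrite H0; ring.
  - rewrite H1; pose proof (sin2_cos2 t); unfold Rsqr in *; lra.
Qed.

Lemma expI_add s t : qmul (expI I s) (expI I t) = expI I (s + t).
Proof.
  destruct (in_S_imaginary I HI) as [H0 H1].
  apply quat_eq; quat_components; rewrite ?cos_plus, ?sin_plus, H0; [| ring..].
  replace (sin s * sin t) with (sin s * sin t * (qi I ^ 2 + qj I ^ 2 + qk I ^ 2))
    by (rewrite H1; ring).
  ring.
Qed.

Lemma circ_norm r t : 0 <= r -> qnorm (circ I r t) = r.
Proof. intros Hr; unfold circ; rewrite qnorm_scale, expI_norm, Rabs_right; lra. Qed.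

Lemma qpow_circ r t k : qpow (circ I r t) k = circ I (r ^ k) (INR k * t).
Proof.
  unfold circ; induction k as [|k IH]; simpl qpow.
  - change (INR 0) with 0; rewrite Rmult_0_l.
    apply quat_eq; quat_components; rewrite ?cos_0, ?sin_0; ring.
  - rewrite IH, S_INR.
    replace ((INR k + 1) * t) with (INR k * t + t) by ring.
    rewrite <- expI_add, <- tech_pow_Rmult; quat_ring.
Qed.

Lemma qdot_expI_mul t a v :
  qdot (qmul (expI I t) a) v = cos t * qdot a v + sin t * qdot (qmul I a) v.
Proof.
  destruct (in_S_imaginary I HI) as [H0 _].
  quat_components; rewrite H0; ring.
Qed.

End ImaginaryUnit.

Lemma continuity_pt_eps f x : continuity_pt f x <-> forall eps, 0 < eps ->
  exists del, 0 < del /\ forall y, Rabs (y - x) < del -> Rabs (f y - f x) < eps.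
Proof.
  split; intros H eps He; destruct (H eps He) as [del [Hd Hy]];
    exists del; split; auto.
  - intros y Hyx; destruct (Req_dec y x) as [->|Hne].
    + rewrite Rminus_diag, Rabs_R0; auto.
    + apply Hy; repeat split; auto.
  - intros y [_ Hyx]; apply Hy, Hyx.
Qed.

Lemma Un_cv_bounded u l : Un_cv u l -> exists M, forall k, Rabs (u k) <= M.
Proof.
  intros Hu.
  assert (Habs : Un_cv (fun k => Rabs (u k)) (Rabs l)) by (apply cv_cvabs, Hu).
  destruct (cauchy_bound _ (CV_Cauchy _ (exist _ _ Habs))) as [M HM].
  exists M; intros k; apply HM; exists k; reflexivity.
Qed.

Lemma geometric_tail_small B lam eps : 0 <= B -> 0 <= lam < 1 -> 0 < eps ->
  exists N0, forall N, (N0 <= N)%nat -> B * lam ^ (S N) / (1 - lam) < eps.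
Proof.
  intros HB Hl He.
  destruct (pow_lt_1_zero lam ltac:(rewrite Rabs_right; lra) (eps * (1 - lam) / (B + 1)))
    as [N0 HN0].
  { apply Rdiv_lt_0_compat; [apply Rmult_lt_0_compat|]; lra. }
  exists N0; intros N HN; specialize (HN0 (S N) ltac:(lia)).
  pose proof (pow_le lam (S N) ltac:(lra)).
  rewrite Rabs_right in HN0 by lra.
  apply Rmult_lt_reg_r with (1 - lam); [lra|].
  apply Rmult_lt_reg_r with (B + 1); [lra|].
  unfold Rdiv in *; field_simplify; [| lra].
  apply (Rmult_lt_compat_r (B + 1)) in HN0; [| lra].
  field_simplify in HN0; [nra | lra].
Qed.

Lemma le_of_geometric_error X Y K B lam n : 0 <= K -> 0 <= B -> 0 <= lam < 1 ->
  (forall N, (n <= N)%nat -> X - K * (B * lam ^ S N / (1 - lam)) <= Y) -> X <= Y.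
Proof.
  intros HK HB Hl H; apply Rle_plus_epsilon; intros eps He.
  destruct (geometric_tail_small B lam (eps / (K + 1)) HB Hl) as [N0 HN0].
  { apply Rdiv_lt_0_compat; lra. }
  specialize (HN0 (N0 + n)%nat ltac:(lia)); specialize (H (N0 + n)%nat ltac:(lia)).
  set (T := B * lam ^ S (N0 + n) / (1 - lam)) in *.
  assert (0 <= T)
    by (unfold T; apply Rdiv_le_0_compat; [apply Rmult_le_pos; [| apply pow_le] |]; lra).
  apply (Rmult_lt_compat_l (K + 1)) in HN0; [| lra].
  replace ((K + 1) * (eps / (K + 1))) with eps in HN0 by (field; lra).
  nra.
Qed.

Lemma pow_bernoulli t n : 0 <= t <= 1 -> 1 - INR n * t <= (1 - t) ^ n.
Proof.
  intros Ht; induction n as [|n IH]; [simpl; lra|].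
  rewrite S_INR; simpl pow.
  pose proof (pos_INR n); pose proof (pow_le (1 - t) n ltac:(lra)).
  destruct (Rle_dec 0 (1 - INR n * t)); nra.
Qed.

Lemma le_of_pow_le c n y del : 0 <= c -> 0 < del ->
  (forall r, 0 < r < 1 -> 1 - del < r -> c * r ^ n <= y) -> c <= y.
Proof.
  intros Hc Hd H; apply Rle_plus_epsilon; intros eps He.
  pose proof (pos_INR n).
  set (t := Rmin (Rmin (del / 2) (1 / 2)) (eps / (c * INR n + 1))).
  assert (Ht0 : 0 < t).
  { unfold t; repeat apply Rmin_pos; try lra; apply Rdiv_lt_0_compat; nra. }
  assert (Ht1 : t <= del / 2) by (unfold t; eapply Rle_trans; apply Rmin_l).
  assert (Ht2 : t <= 1 / 2) by (unfold t; eapply Rle_trans; [apply Rmin_l|apply Rmin_r]).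
  assert (Ht3 : (c * INR n + 1) * t <= eps).
  { apply (Rmult_le_reg_r (/ (c * INR n + 1))); [apply Rinv_0_lt_compat; nra|].
    replace ((c * INR n + 1) * t * / (c * INR n + 1)) with t by (field; nra).
    apply Rmin_r. }
  specialize (H (1 - t) ltac:(lra) ltac:(lra)).
  pose proof (pow_bernoulli t n ltac:(lra)).
  assert (c * (1 - INR n * t) <= c * (1 - t) ^ n) by (apply Rmult_le_compat_l; auto).
  nra.
Qed.

Lemma rpow_ge0 x p : 0 <= rpow x p.
Proof. unfold rpow; destruct (Rlt_dec 0 x); [left; apply exp_pos | lra]. Qed.

Lemma rpow_pos x p : 0 < x -> rpow x p = Rpower x p.
Proof. intros; unfold rpow; destruct (Rlt_dec 0 x); [reflexivity | lra]. Qed.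

Lemma Rpower_bernoulli t p : 0 < t -> 1 <= p -> 1 + p * (t - 1) <= Rpower t p.
Proof.
  intros Ht Hp; unfold Rpower.
  replace (p * ln t) with (ln t + (p - 1) * ln t) by ring.
  rewrite exp_plus, exp_ln by auto.
  pose proof (exp_ineq1_le ((p - 1) * ln t)).
  pose proof (exp_ineq1_le (- ln t)) as Hinv; rewrite exp_Ropp, exp_ln in Hinv by auto.
  assert (t - t * ln t <= 1).
  { apply (Rmult_le_compat_l t) in Hinv; [|lra]. rewrite Rinv_r in Hinv by lra. lra. }
  nra.
Qed.

Lemma rpow_tangent_le x d p : 0 <= x -> 0 < d -> 1 <= p ->
  Rpower d p + p * Rpower d (p - 1) * (x - d) <= rpow x p.
Proof.
  intros Hx Hd Hp.
  assert (Hdp : Rpower d p = Rpower d (p - 1) * d).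
  { replace p with ((p - 1) + 1) at 1 by ring. rewrite Rpower_plus, Rpower_1; auto. }
  assert (Hpos : 0 < Rpower d (p - 1)) by apply exp_pos.
  destruct (Rle_lt_or_eq_dec 0 x Hx) as [Hx'|<-].
  - rewrite rpow_pos by auto.
    replace x with (d * (x / d)) at 2 by (field; lra).
    assert (Hxd : 0 < x / d) by (apply Rdiv_lt_0_compat; auto).
    rewrite <- Rpower_mult_distr, Hdp by auto.
    pose proof (Rpower_bernoulli (x / d) p Hxd Hp).
    assert (Rpower d (p - 1) * d * (1 + p * (x / d - 1))
              <= Rpower d (p - 1) * d * Rpower (x / d) p)
      by (apply Rmult_le_compat_l; nra).
    replace (Rpower d (p - 1) * d * (1 + p * (x / d - 1))) with
      (Rpower d (p - 1) * d + p * Rpower d (p - 1) * (x - d)) in H0 by (field; lra).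
    lra.
  - unfold rpow; destruct (Rlt_dec 0 0); [lra|].
    rewrite Hdp; pose proof (Rmult_lt_0_compat _ _ Hpos Hd); nra.
Qed.

Lemma rpow_continuous p y0 : 1 <= p -> 0 <= y0 -> forall eps, 0 < eps ->
  exists del, 0 < del /\
    forall y, 0 <= y -> Rabs (y - y0) < del -> Rabs (rpow y p - rpow y0 p) < eps.
Proof.
  intros Hp Hy0 eps He; destruct (Rle_lt_or_eq_dec 0 y0 Hy0) as [Hpos|<-].
  - assert (Hc : continuity_pt (fun y => Rpower y p) y0).
    { apply derivable_continuous_pt; exists (p * Rpower y0 (p - 1)).
      apply derivable_pt_lim_power; auto. }
    destruct (proj1 (continuity_pt_eps _ _) Hc eps He) as [d [Hd K]].
    exists (Rmin d y0); split; [apply Rmin_pos; auto|].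
    intros y Hy Hyy; pose proof (Rmin_l d y0); pose proof (Rmin_r d y0).
    apply Rabs_def2 in Hyy.
    rewrite !rpow_pos by lra; apply K; apply Rabs_def1; lra.
  - exists (Rmin eps 1); split; [apply Rmin_pos; lra|].
    intros y Hy Hyy; pose proof (Rmin_l eps 1); pose proof (Rmin_r eps 1).
    unfold rpow at 2; destruct (Rlt_dec 0 0); [lra|].
    rewrite Rminus_0_r in *; rewrite Rabs_right in Hyy by lra.
    rewrite Rabs_right by apply Rle_ge, rpow_ge0.
    destruct (Rle_lt_or_eq_dec 0 y Hy) as [Hyp|<-].
    + (* y^p <= y for 0 < y < 1 *)
      rewrite rpow_pos by auto; unfold Rpower.
      assert (ln y < 0) by (rewrite <- ln_1; apply ln_increasing; lra).
      apply Rle_lt_trans with (exp (ln y)); [| rewrite exp_ln; lra].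
      assert (Hle : p * ln y <= ln y) by nra.
      destruct Hle as [Hlt | ->]; [left; apply exp_increasing, Hlt | lra].
    + unfold rpow; destruct (Rlt_dec 0 0); lra.
Qed.

Definition qterm (a : nat -> quat) (q : quat) (k : nat) : quat := qmul (qpow q k) (a k).

Lemma qpsum_S a q M : qpsum a q (S M) = qadd (qpsum a q M) (qterm a q (S M)).
Proof. reflexivity. Qed.

Lemma qterm_norm a q k : qnorm (qterm a q k) = qnorm q ^ k * qnorm (a k).
Proof. unfold qterm; rewrite qnorm_mul, qpow_norm; reflexivity. Qed.

Lemma qnorm_sub_le_components p q : qnorm (qsub p q) <=
  Rabs (qr p - qr q) + Rabs (qi p - qi q) + Rabs (qj p - qj q) + Rabs (qk p - qk q).
Proof.
  eapply Rle_trans; [apply qnorm_le_components|].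
  unfold qsub, qadd, qscale; cbn [qr qi qj qk].
  replace (qr p + -1 * qr q) with (qr p - qr q) by ring.
  replace (qi p + -1 * qi q) with (qi p - qi q) by ring.
  replace (qj p + -1 * qj q) with (qj p - qj q) by ring.
  replace (qk p + -1 * qk q) with (qk p - qk q) by ring.
  lra.
Qed.

Lemma qseries_cv_qnorm a q s : qseries_cv a q s -> forall eps, 0 < eps ->
  exists N, forall M, (N <= M)%nat -> qnorm (qsub (qpsum a q M) s) < eps.
Proof.
  intros [H1 [H2 [H3 H4]]] eps He.
  destruct (H1 (eps / 4) ltac:(lra)) as [N1 K1].
  destruct (H2 (eps / 4) ltac:(lra)) as [N2 K2].
  destruct (H3 (eps / 4) ltac:(lra)) as [N3 K3].
  destruct (H4 (eps / 4) ltac:(lra)) as [N4 K4].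
  exists (N1 + N2 + N3 + N4)%nat; intros M HM.
  specialize (K1 M ltac:(lia)); specialize (K2 M ltac:(lia));
  specialize (K3 M ltac:(lia)); specialize (K4 M ltac:(lia)); unfold R_dist in *.
  eapply Rle_lt_trans; [apply qnorm_sub_le_components | lra].
Qed.

Lemma qseries_cv_le a q s Y T N : qseries_cv a q s ->
  (forall M, (N <= M)%nat -> qnorm (qsub (qpsum a q M) Y) <= T) -> qnorm (qsub s Y) <= T.
Proof.
  intros Hs HT; apply Rle_plus_epsilon; intros eps He.
  destruct (qseries_cv_qnorm a q s Hs eps He) as [N1 K1].
  specialize (K1 (N + N1)%nat ltac:(lia)); specialize (HT (N + N1)%nat ltac:(lia)).
  rewrite qnorm_sub_sym in K1.
  pose proof (qnorm_sub_triangle s (qpsum a q (N + N1)) Y); lra.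
Qed.

Lemma feval_spec a q : slice_regular_ball a -> qnorm q < 1 -> qseries_cv a q (feval a q).
Proof. intros Hreg Hq; unfold feval; apply epsilon_spec, Hreg, Hq. Qed.

Lemma slice_regular_coef_bound a rho : slice_regular_ball a -> 0 < rho < 1 ->
  exists B, 0 <= B /\ forall k, rho ^ k * qnorm (a k) <= B.
Proof.
  intros Hreg Hrho; set (q := qreal rho).
  assert (Hq : qnorm q < 1) by (unfold q; rewrite qnorm_qreal, Rabs_right; lra).
  pose proof (feval_spec a q Hreg Hq) as Hs.
  assert (Hcv : Un_cv (fun M => qnorm (qpsum a q M)) (qnorm (feval a q))).
  { intros eps He; destruct (qseries_cv_qnorm a q _ Hs eps He) as [N K].
    exists N; intros M HM; specialize (K M HM); unfold R_dist.
    pose proof (qnorm_sub_ge (qpsum a q M) (feval a q)).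
    pose proof (qnorm_sub_ge (feval a q) (qpsum a q M)).
    rewrite qnorm_sub_sym in H0; apply Rabs_def1; lra. }
  destruct (Un_cv_bounded _ _ Hcv) as [B HB].
  assert (Hpsum : forall M, qnorm (qpsum a q M) <= B)
    by (intros M; specialize (HB M); rewrite Rabs_right in HB; auto; apply Rle_ge, qnorm_ge0).
  exists (2 * B); split; [pose proof (Hpsum O); pose proof (qnorm_ge0 (qpsum a q O)); lra|].
  intros k; replace (rho ^ k * qnorm (a k)) with (qnorm (qterm a q k))
    by (rewrite qterm_norm; unfold q; rewrite qnorm_qreal, Rabs_right; lra).
  destruct k as [|m].
  - change (qterm a q 0) with (qpsum a q 0).
    pose proof (Hpsum O); pose proof (qnorm_ge0 (qpsum a q O)); lra.
  - replace (qterm a q (S m)) with (qsub (qpsum a q (S m)) (qpsum a q m))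
      by (rewrite qpsum_S; quat_ring).
    pose proof (qnorm_sub_le (qpsum a q (S m)) (qpsum a q m)).
    pose proof (Hpsum m); pose proof (Hpsum (S m)); lra.
Qed.

Section GeometricTail.
Variables (a : nat -> quat) (q : quat) (B lam : R).
Hypotheses (HB : 0 <= B) (Hlam : 0 <= lam < 1)
  (Hdom : forall k, qnorm (qterm a q k) <= B * lam ^ k).

Lemma qpsum_tail_le N M : (N <= M)%nat ->
  qnorm (qsub (qpsum a q M) (qpsum a q N)) <= B * lam ^ S N / (1 - lam).
Proof.
  assert (Hexact : forall m, qnorm (qsub (qpsum a q (N + m)) (qpsum a q N))
                     <= B * (lam ^ S N - lam ^ S (N + m)) / (1 - lam)).
  { induction m as [|m IH].
    - rewrite Nat.add_0_r.
      replace (qsub (qpsum a q N) (qpsum a q N)) with qzero by quat_ring.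
      rewrite qnorm_zero, Rminus_diag; unfold Rdiv; lra.
    - rewrite Nat.add_succ_r, qpsum_S.
      replace (qsub (qadd (qpsum a q (N + m)) (qterm a q (S (N + m)))) (qpsum a q N))
        with (qadd (qsub (qpsum a q (N + m)) (qpsum a q N)) (qterm a q (S (N + m))))
        by quat_ring.
      eapply Rle_trans; [apply qnorm_add_le|].
      pose proof (Hdom (S (N + m))).
      replace (B * (lam ^ S N - lam ^ S (S (N + m))) / (1 - lam))
        with (B * (lam ^ S N - lam ^ S (N + m)) / (1 - lam) + B * lam ^ S (N + m))
        by (simpl; field; lra).
      lra. }
  intros HNM; replace M with (N + (M - N))%nat by lia.
  eapply Rle_trans; [apply Hexact|].
  apply Rmult_le_compat_r; [left; apply Rinv_0_lt_compat; lra|].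
  pose proof (pow_le lam (S (N + (M - N))) ltac:(lra)); nra.
Qed.

Lemma feval_tail_le N : slice_regular_ball a -> qnorm q < 1 ->
  qnorm (qsub (feval a q) (qpsum a q N)) <= B * lam ^ S N / (1 - lam).
Proof.
  intros Hreg Hq; apply (qseries_cv_le a q _ _ _ N); [apply feval_spec; auto|].
  apply qpsum_tail_le.
Qed.

End GeometricTail.

(* The ratio is r / rho for rho = (1 + r) / 2, where the coefficients are bounded. *)
Lemma circ_qterm_geometric a I r : slice_regular_ball a -> in_S I -> 0 < r < 1 ->
  exists B lam, 0 <= B /\ 0 <= lam < 1 /\
    forall t k, qnorm (qterm a (circ I r t) k) <= B * lam ^ k.
Proof.
  intros Hreg HI Hr; set (rho := (1 + r) / 2).
  destruct (slice_regular_coef_bound a rho Hreg ltac:(unfold rho; lra)) as [B [HB HBk]].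
  exists B, (r / rho); split; [auto | split].
  - unfold rho; split; [apply Rdiv_le_0_compat; lra|].
    apply (Rdiv_lt_1 r ((1 + r) / 2)); lra.
  - intros t k; rewrite qterm_norm, circ_norm by (auto; lra).
    assert (Hrho : 0 < rho ^ k) by (apply pow_lt; unfold rho; lra).
    unfold Rdiv; rewrite Rpow_mult_distr, pow_inv.
    replace (r ^ k * qnorm (a k)) with ((rho ^ k * qnorm (a k)) * (r ^ k * / rho ^ k))
      by (field; lra).
    apply Rmult_le_compat_r; [| apply HBk].
    apply Rmult_le_pos; [apply pow_le; lra | left; apply Rinv_0_lt_compat, Hrho].
Qed.

Definition qcontinuity_pt (F : R -> quat) (x : R) : Prop :=
  continuity_pt (fun t => qr (F t)) x /\ continuity_pt (fun t => qi (F t)) x /\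
  continuity_pt (fun t => qj (F t)) x /\ continuity_pt (fun t => qk (F t)) x.

Ltac continuity_pt_arith :=
  repeat first [ apply continuity_pt_minus | apply continuity_pt_plus
               | apply continuity_pt_mult | apply continuity_pt_opp
               | apply continuity_pt_const; intros ? ?; reflexivity | assumption ].

Lemma qcontinuity_pt_const c x : qcontinuity_pt (fun _ => c) x.
Proof. repeat split; continuity_pt_arith. Qed.

Lemma qcontinuity_pt_add F G x :
  qcontinuity_pt F x -> qcontinuity_pt G x -> qcontinuity_pt (fun t => qadd (F t) (G t)) x.
Proof.
  intros [? [? [? ?]]] [? [? [? ?]]]; repeat split; cbn [qadd qr qi qj qk];
    continuity_pt_arith.
Qed.

Lemma qcontinuity_pt_mul F G x :
  qcontinuity_pt F x -> qcontinuity_pt G x -> qcontinuity_pt (fun t => qmul (F t) (G t)) x.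
Proof.
  intros [? [? [? ?]]] [? [? [? ?]]]; repeat split; cbn [qmul qr qi qj qk];
    continuity_pt_arith.
Qed.

Lemma qcontinuity_pt_circ I r x : qcontinuity_pt (circ I r) x.
Proof.
  pose proof (continuity_cos x); pose proof (continuity_sin x).
  unfold circ; repeat split; quat_components; continuity_pt_arith.
Qed.

Lemma qcontinuity_pt_qpsum a F x N : qcontinuity_pt F x ->
  qcontinuity_pt (fun t => qpsum a (F t) N) x.
Proof.
  intros HF.
  assert (Hpow : forall k, qcontinuity_pt (fun t => qpow (F t) k) x).
  { induction k; simpl qpow; [apply qcontinuity_pt_const | apply qcontinuity_pt_mul; auto]. }
  induction N; cbn [qpsum]; [| apply qcontinuity_pt_add; auto];
    apply qcontinuity_pt_mul; auto; apply qcontinuity_pt_const.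
Qed.

Lemma qcontinuity_pt_eps F x : qcontinuity_pt F x -> forall eps, 0 < eps ->
  exists del, 0 < del /\ forall y, Rabs (y - x) < del -> qnorm (qsub (F y) (F x)) < eps.
Proof.
  intros [H1 [H2 [H3 H4]]] eps He.
  destruct (proj1 (continuity_pt_eps _ _) H1 (eps / 4) ltac:(lra)) as [d1 [Hd1 K1]].
  destruct (proj1 (continuity_pt_eps _ _) H2 (eps / 4) ltac:(lra)) as [d2 [Hd2 K2]].
  destruct (proj1 (continuity_pt_eps _ _) H3 (eps / 4) ltac:(lra)) as [d3 [Hd3 K3]].
  destruct (proj1 (continuity_pt_eps _ _) H4 (eps / 4) ltac:(lra)) as [d4 [Hd4 K4]].
  exists (Rmin (Rmin d1 d2) (Rmin d3 d4)); split; [repeat apply Rmin_pos; auto|].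
  intros y Hy.
  pose proof (Rmin_l (Rmin d1 d2) (Rmin d3 d4)); pose proof (Rmin_r (Rmin d1 d2) (Rmin d3 d4)).
  pose proof (Rmin_l d1 d2); pose proof (Rmin_r d1 d2);
  pose proof (Rmin_l d3 d4); pose proof (Rmin_r d3 d4).
  specialize (K1 y ltac:(lra)); specialize (K2 y ltac:(lra));
  specialize (K3 y ltac:(lra)); specialize (K4 y ltac:(lra)).
  eapply Rle_lt_trans; [apply qnorm_sub_le_components | lra].
Qed.

Section CircleIntegrand.
Variables (a : nat -> quat) (I : quat) (r p : R).
Hypotheses (Hreg : slice_regular_ball a) (HI : in_S I) (Hr : 0 < r < 1) (Hp : 1 <= p).

Definition hardy_integrand (t : R) : R := rpow (qnorm (feval a (circ I r t))) p.

(* f is a uniform limit of its partial sums on the circle. *)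
Lemma feval_circ_continuous x eps : 0 < eps -> exists del, 0 < del /\
  forall y, Rabs (y - x) < del -> qnorm (qsub (feval a (circ I r y)) (feval a (circ I r x))) < eps.
Proof.
  intros He.
  destruct (circ_qterm_geometric a I r Hreg HI Hr) as [B [lam [HB [Hl Ht]]]].
  destruct (geometric_tail_small B lam (eps / 3) HB Hl ltac:(lra)) as [N HN].
  specialize (HN N (le_n _)).
  destruct (qcontinuity_pt_eps _ _ (qcontinuity_pt_qpsum a _ x N (qcontinuity_pt_circ I r x))
              (eps / 3) ltac:(lra)) as [d [Hd K]].
  exists d; split; auto; intros y Hy.
  assert (Hq : forall t, qnorm (circ I r t) < 1) by (intros; rewrite (circ_norm I HI); lra).
  pose proof (feval_tail_le a _ B lam HB Hl (Ht y) N Hreg (Hq y)) as Ty.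
  pose proof (feval_tail_le a _ B lam HB Hl (Ht x) N Hreg (Hq x)) as Tx.
  rewrite qnorm_sub_sym in Tx; specialize (K y Hy).
  pose proof (qnorm_sub_triangle (feval a (circ I r y)) (qpsum a (circ I r y) N)
                (feval a (circ I r x))).
  pose proof (qnorm_sub_triangle (qpsum a (circ I r y) N) (qpsum a (circ I r x) N)
                (feval a (circ I r x))).
  lra.
Qed.

Lemma hardy_integrand_continuous x : continuity_pt hardy_integrand x.
Proof.
  apply continuity_pt_eps; intros eps He.
  destruct (rpow_continuous p _ Hp (qnorm_ge0 (feval a (circ I r x))) eps He) as [d1 [Hd1 K1]].
  destruct (feval_circ_continuous x d1 Hd1) as [d [Hd K]].
  exists d; split; auto; intros y Hy; apply K1; [apply qnorm_ge0|].
  specialize (K y Hy).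
  pose proof (qnorm_sub_ge (feval a (circ I r y)) (feval a (circ I r x))).
  pose proof (qnorm_sub_ge (feval a (circ I r x)) (feval a (circ I r y))).
  rewrite qnorm_sub_sym in H0; apply Rabs_def1; lra.
Qed.

Lemma hardy_integrand_integrable : Riemann_integrable hardy_integrand (- PI) PI.
Proof.
  apply continuity_implies_RiemannInt; [pose proof PI_RGT_0; lra|].
  intros; apply hardy_integrand_continuous.
Qed.

End CircleIntegrand.

Lemma is_RInt_Defs_RInt f lo hi :
  Riemann_integrable f lo hi -> is_RInt f lo hi (Defs.RInt f lo hi).
Proof.
  intros pr.
  assert (Hex : exists v, exists pr : Riemann_integrable f lo hi, RiemannInt pr = v)
    by (exists (RiemannInt pr), pr; reflexivity).
  destruct (epsilon_spec (inhabits 0) _ Hex) as [pr' E]; unfold Defs.RInt; rewrite <- E.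
  rewrite <- RInt_Reals; apply (RInt_correct (V := R_CompleteNormedModule)).
  apply ex_RInt_Reals_1, pr'.
Qed.

Lemma is_RInt_eq_value (f : R -> R) lo hi (l l' : R) :
  is_RInt f lo hi l -> l = l' -> is_RInt f lo hi l'.
Proof. intros H <-; exact H. Qed.

Lemma is_RInt_cos_sin (m : Z) al be :
  is_RInt (fun t => cos (IZR m * t) * al + sin (IZR m * t) * be) (- PI) PI
    (if Z.eqb m 0 then 2 * PI * al else 0).
Proof.
  destruct (Z.eqb_spec m 0) as [->|Hm].
  - apply (is_RInt_ext (fun _ => al)).
    { intros x _; now rewrite Rmult_0_l, cos_0, sin_0, Rmult_1_l, Rmult_0_l, Rplus_0_r. }
    apply (is_RInt_eq_value _ _ _ _ _ (is_RInt_const (V := R_NormedModule) (- PI) PI al)).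
    unfold scal; simpl; unfold mult; simpl; ring.
  - assert (Hm' : IZR m <> 0) by (apply not_0_IZR, Hm).
    set (prim := fun t => (al * sin (IZR m * t) - be * cos (IZR m * t)) / IZR m).
    replace 0 with (minus (prim PI) (prim (- PI))).
    + apply (is_RInt_derive (V := R_CompleteNormedModule) prim).
      * intros x _; unfold prim; auto_derive; [auto | field; auto].
      * intros x _; apply (ex_derive_continuous (K := R_AbsRing) (V := R_NormedModule)).
        auto_derive; auto.
    + assert (Hsin : sin (IZR m * PI) = 0) by (apply sin_eq_0_1; exists m; reflexivity).
      unfold prim, minus, plus, opp; simpl.
      replace (IZR m * - PI) with (- (IZR m * PI)) by ring.
      rewrite sin_neg, cos_neg, Hsin; field; auto.
Qed.

Section FourierCoefficient.
Variables (a : nat -> quat) (I v : quat) (n : nat) (r : R).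
Hypothesis HI : in_S I.

Definition fourier_integrand (N : nat) (t : R) : R :=
  qdot (qmul (expI I (- INR n * t)) (qpsum a (circ I r t) N)) v.

Lemma qdot_fourier_qterm k t :
  qdot (qmul (expI I (- INR n * t)) (qterm a (circ I r t) k)) v =
  r ^ k * (cos (IZR (Z.of_nat k - Z.of_nat n) * t) * qdot (a k) v
           + sin (IZR (Z.of_nat k - Z.of_nat n) * t) * qdot (qmul I (a k)) v).
Proof.
  unfold qterm; rewrite (qpow_circ I HI); unfold circ.
  rewrite qmul_scale_l, qmul_scale_r, <- qmul_assoc, (expI_add I HI), qdot_scale_l.
  replace (IZR (Z.of_nat k - Z.of_nat n) * t) with (- INR n * t + INR k * t)
    by (rewrite minus_IZR, <- !INR_IZR_INZ; ring).
  rewrite (qdot_expI_mul I HI); reflexivity.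
Qed.

Lemma is_RInt_fourier_qterm k :
  is_RInt (fun t => qdot (qmul (expI I (- INR n * t)) (qterm a (circ I r t) k)) v) (- PI) PI
    (if Nat.eqb k n then 2 * PI * (r ^ n * qdot (a n) v) else 0).
Proof.
  pose proof (is_RInt_scal _ (- PI) PI (r ^ k) _
    (is_RInt_cos_sin (Z.of_nat k - Z.of_nat n) (qdot (a k) v) (qdot (qmul I (a k)) v))) as H.
  unfold scal in H; simpl in H; unfold mult in H; simpl in H.
  eapply is_RInt_ext; [intros t _; symmetry; apply qdot_fourier_qterm|].
  apply (is_RInt_eq_value _ _ _ _ _ H).
  destruct (Nat.eqb_spec k n) as [Hkn|Hkn]; destruct (Z.eqb_spec (Z.of_nat k - Z.of_nat n) 0);
    try lia; [subst; ring | ring].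
Qed.

Lemma is_RInt_fourier_integrand N :
  is_RInt (fourier_integrand N) (- PI) PI
    (if Nat.leb n N then 2 * PI * (r ^ n * qdot (a n) v) else 0).
Proof.
  induction N as [|N IH].
  - apply (is_RInt_eq_value _ _ _ _ _ (is_RInt_fourier_qterm 0)).
    destruct n; reflexivity.
  - apply (is_RInt_ext (fun t => fourier_integrand N t
             + qdot (qmul (expI I (- INR n * t)) (qterm a (circ I r t) (S N))) v)).
    + intros t _; unfold fourier_integrand.
      rewrite qpsum_S, qmul_add_r, qdot_add_l; reflexivity.
    + apply (is_RInt_eq_value _ _ _ _ _
               (is_RInt_plus _ _ _ _ _ _ IH (is_RInt_fourier_qterm (S N)))).
      destruct (Nat.leb_spec n N); destruct (Nat.eqb_spec (S N) n);
        destruct (Nat.leb_spec n (S N)); try lia; unfold plus; simpl; ring.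
Qed.

End FourierCoefficient.

Section CauchyEstimate.
Variables (a : nat -> quat) (I : quat) (r p : R).
Hypotheses (Hreg : slice_regular_ball a) (HI : in_S I) (Hr : 0 < r < 1) (Hp : 1 <= p).

Lemma hardy_integrand_ge_tangent v n d B lam N t :
  qnorm v = 1 -> 0 < d -> 0 <= B -> 0 <= lam < 1 ->
  (forall k, qnorm (qterm a (circ I r t) k) <= B * lam ^ k) ->
  Rpower d p + p * Rpower d (p - 1)
    * (fourier_integrand a I v n r N t - (B * lam ^ S N / (1 - lam) + d))
  <= hardy_integrand a I r p t.
Proof.
  intros Hv Hd HB Hl Hdom.
  set (F := feval a (circ I r t)); set (SN := qpsum a (circ I r t) N).
  assert (Htail : qnorm (qsub F SN) <= B * lam ^ S N / (1 - lam))
    by (apply feval_tail_le; auto; rewrite (circ_norm I HI); lra).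
  assert (Hproj : fourier_integrand a I v n r N t <= qnorm SN).
  { unfold fourier_integrand; eapply Rle_trans; [apply qdot_le_qnorm|].
    rewrite Hv, qnorm_mul, (expI_norm I HI); fold SN; lra. }
  pose proof (qnorm_sub_ge SN F); rewrite qnorm_sub_sym in H.
  pose proof (rpow_tangent_le (qnorm F) d p (qnorm_ge0 F) Hd Hp).
  assert (0 <= p * Rpower d (p - 1)) by (apply Rmult_le_pos; [lra | left; apply exp_pos]).
  unfold hardy_integrand; fold F.
  apply Rle_trans with (Rpower d p + p * Rpower d (p - 1) * (qnorm F - d)); [| lra].
  apply Rplus_le_compat_l, Rmult_le_compat_l; lra.
Qed.

Lemma hardy_integral_ge n : 0 < qnorm (a n) ->
  2 * PI * Rpower (qnorm (a n) * r ^ n) p <= Defs.RInt (hardy_integrand a I r p) (- PI) PI.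
Proof.
  intros Hc; pose proof PI_RGT_0.
  set (c := qnorm (a n)) in *; set (v := qscale (/ c) (a n)); set (d := c * r ^ n).
  set (K := p * Rpower d (p - 1)).
  assert (Hv : qnorm v = 1).
  { unfold v; rewrite qnorm_scale, Rabs_right; [fold c; field; lra|].
    left; apply Rinv_0_lt_compat, Hc. }
  assert (Hcoef : r ^ n * qdot (a n) v = d).
  { unfold v, d.
    replace (qdot (a n) (qscale (/ c) (a n))) with (/ c * (qnorm (a n) * qnorm (a n)))
      by (rewrite qnorm_sq; quat_components; ring).
    fold c; field; lra. }
  assert (Hd : 0 < d) by (apply Rmult_lt_0_compat; [lra | apply pow_lt; lra]).
  assert (HK : 0 <= 2 * PI * K)
    by (apply Rmult_le_pos; [lra | apply Rmult_le_pos; [lra | left; apply exp_pos]]).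
  destruct (circ_qterm_geometric a I r Hreg HI Hr) as [B [lam [HB [Hl Hdom]]]].
  pose proof (is_RInt_Defs_RInt _ _ _ (hardy_integrand_integrable a I r p Hreg HI Hr Hp)) as Hg.
  apply (le_of_geometric_error _ _ _ B lam n HK HB Hl); intros N HN.
  set (Tb := B * lam ^ S N / (1 - lam)).
  pose proof (is_RInt_fourier_integrand a I v n r HI N) as HP.
  rewrite (proj2 (Nat.leb_le n N) HN), Hcoef in HP.
  pose proof (is_RInt_plus _ _ _ _ _ _
    (is_RInt_const (V := R_NormedModule) (- PI) PI (Rpower d p))
    (is_RInt_scal _ _ _ K _ (is_RInt_minus _ _ _ _ _ _ HP
      (is_RInt_const (V := R_NormedModule) (- PI) PI (Tb + d))))) as Hell.
  apply (is_RInt_eq_value _ _ _ _ (2 * PI * Rpower d p - 2 * PI * K * Tb)) in Hell.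
  - apply (is_RInt_le _ _ (- PI) PI _ _ ltac:(lra) Hell Hg).
    intros t _; apply hardy_integrand_ge_tangent; auto.
  - unfold plus, scal, minus, opp, mult; simpl; unfold mult, plus, opp; simpl; ring.
Qed.

End CauchyEstimate.

Lemma hardy_mean_ge a I n p r : slice_regular_ball a -> in_S I -> 1 <= p -> 0 < r < 1 ->
  qnorm (a n) * r ^ n <= hardy_mean p a I r.
Proof.
  intros Hreg HI Hp Hr; pose proof PI_RGT_0.
  destruct (Rle_lt_or_eq_dec 0 (qnorm (a n)) (qnorm_ge0 _)) as [Hc|<-].
  2:{ rewrite Rmult_0_l; apply rpow_ge0. }
  pose proof (hardy_integral_ge a I r p Hreg HI Hr Hp n Hc) as Hint.
  unfold hardy_mean; fold (hardy_integrand a I r p).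
  set (d := qnorm (a n) * r ^ n) in *.
  assert (Hd : 0 < d) by (apply Rmult_lt_0_compat; [lra | apply pow_lt; lra]).
  assert (Hdp : 0 < Rpower d p) by apply exp_pos.
  assert (HX : Rpower d p <= / (2 * PI) * Defs.RInt (hardy_integrand a I r p) (- PI) PI).
  { apply (Rmult_le_reg_l (2 * PI)); [lra|].
    rewrite <- Rmult_assoc, Rinv_r, Rmult_1_l by lra; exact Hint. }
  rewrite rpow_pos by (eapply Rlt_le_trans; [exact Hdp | exact HX]).
  apply Rle_trans with (Rpower (Rpower d p) (1 / p)).
  - rewrite Rpower_mult; replace (p * (1 / p)) with 1 by (field; lra).
    rewrite Rpower_1; lra.
  - apply Rle_Rpower_l; [left; apply Rdiv_lt_0_compat; lra | split; [exact Hdp | exact HX]].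
Qed.

Lemma hardy_slice_limit_ge a I n p L : slice_regular_ball a -> in_S I -> 1 <= p ->
  hardy_slice_limit p a I L -> qnorm (a n) <= L.
Proof.
  intros Hreg HI Hp HL; apply Rle_plus_epsilon; intros eps He.
  destruct (HL eps He) as [del [Hd K]].
  apply (le_of_pow_le _ n _ del (qnorm_ge0 _) Hd); intros r Hr Hrd.
  pose proof (hardy_mean_ge a I n p r Hreg HI Hp Hr).
  assert (Hclose : R_dist (hardy_mean p a I r) L < eps).
  { apply K; split; [lra|]; simpl; unfold R_dist; rewrite Rabs_left; lra. }
  unfold R_dist in Hclose; apply Rabs_def2 in Hclose; lra.
Qed.

Lemma hinf_norm_ge a n N : slice_regular_ball a -> hinf_norm a N -> qnorm (a n) <= N.
Proof.
  intros Hreg [Hub _]; pose proof PI_RGT_0.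
  assert (Hle : forall q, qnorm q < 1 -> qnorm (feval a q) <= N)
    by (intros q Hq; apply Hub; exists q; auto).
  assert (HN : 0 <= N) by (eapply Rle_trans; [apply qnorm_ge0 | apply (Hle qzero)];
                           rewrite qnorm_zero; lra).
  destruct (Rle_lt_or_eq_dec 0 (qnorm (a n)) (qnorm_ge0 _)) as [Hc|<-]; [|exact HN].
  apply (le_of_pow_le _ n _ 1 (qnorm_ge0 _) ltac:(lra)); intros r Hr _.
  pose proof (hardy_integral_ge a I_unit r 1 Hreg I_unit_in_S Hr (Rle_refl 1) n Hc) as Hint.
  rewrite Rpower_1 in Hint by (apply Rmult_lt_0_compat; [lra | apply pow_lt; lra]).
  assert (Hint_le : Defs.RInt (hardy_integrand a I_unit r 1) (- PI) PI <= 2 * PI * N).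
  { apply (is_RInt_le (hardy_integrand a I_unit r 1) (fun _ => N) (- PI) PI); [lra | | |].
    - apply is_RInt_Defs_RInt, hardy_integrand_integrable; auto using I_unit_in_S; lra.
    - apply (is_RInt_eq_value _ _ _ _ _ (is_RInt_const (V := R_NormedModule) (- PI) PI N)).
      unfold scal; simpl; unfold mult; simpl; ring.
    - intros t _; unfold hardy_integrand, rpow.
      pose proof (Hle (circ I_unit r t) ltac:(rewrite (circ_norm I_unit I_unit_in_S); lra)).
      destruct (Rlt_dec 0 _); [rewrite Rpower_1 |]; lra. }
  nra.
Qed.

Lemma hardy_constant_ge1 p n : 1 <= p ->
  1 <= sqrt 2 * exp (1 / p) * Rpower (1 + INR n * p / 2) (1 / p).
Proof.
  intros Hp; pose proof (pos_INR n).
  assert (Hp' : 0 < 1 / p) by (apply Rdiv_lt_0_compat; lra).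
  assert (H1 : 1 <= sqrt 2) by (rewrite <- sqrt_1; apply sqrt_le_1_alt; lra).
  assert (H2 : 1 <= exp (1 / p)) by (pose proof (exp_ineq1_le (1 / p)); lra).
  assert (H3 : 1 <= Rpower (1 + INR n * p / 2) (1 / p)).
  { apply Rle_trans with (Rpower (1 + INR n * p / 2) 0).
    - rewrite Rpower_O by nra; lra.
    - apply Rle_Rpower; [nra | lra]. }
  assert (1 <= sqrt 2 * exp (1 / p)) by nra.
  nra.
Qed.

Theorem lemma8p3 (a : nat -> quat) (Hreg : slice_regular_ball a) (n : nat) :
  (forall (p N : R), 1 <= p -> hardy_norm p a N ->
     qnorm (slice_deriv0 a n) <=
       sqrt 2 * INR (fact n) * exp (1 / p) *
       Rpower (1 + INR n * p / 2) (1 / p) * N) /\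
  (forall N : R, hinf_norm a N ->
     qnorm (slice_deriv0 a n) <= INR (fact n) * N).
Proof.
  assert (Hderiv : qnorm (slice_deriv0 a n) = INR (fact n) * qnorm (a n)).
  { unfold slice_deriv0; rewrite qnorm_scale, Rabs_right; auto; apply Rle_ge, pos_INR. }
  pose proof (pos_INR (fact n)) as Hfact; rewrite Hderiv.
  split.
  - intros p N Hp [Hlim Hlub].
    destruct (Hlim I_unit I_unit_in_S) as [L HL].
    assert (HLN : L <= N) by (apply (proj1 Hlub); exists I_unit; split; auto using I_unit_in_S).
    pose proof (hardy_slice_limit_ge a I_unit n p L Hreg I_unit_in_S Hp HL).
    pose proof (hardy_constant_ge1 p n Hp); pose proof (qnorm_ge0 (a n)).
    replace (sqrt 2 * INR (fact n) * exp (1 / p) * Rpower (1 + INR n * p / 2) (1 / p) * N)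
      with (INR (fact n) * ((sqrt 2 * exp (1 / p) * Rpower (1 + INR n * p / 2) (1 / p)) * N))
      by ring.
    apply Rmult_le_compat_l; nra.
  - intros N HN; apply Rmult_le_compat_l; [exact Hfact | apply hinf_norm_ge; auto].
Qed.
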